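(* Let $q$ be a prime power and let $V\subseteq GF(q)^n$ be a linear subspace. Then $$\sum_{k=0}^n\frac{|\mathcal{A}_k(V)|}{(q-1)^k\binom{n}{k}}=\frac{(n+1)(q-1)}{q^{1+n-\dim V}}\sum_{k=0}^n\frac{|\mathcal{A}_k(V^\perp)|}{k+1}\left(1-\frac{(-1)^{k+1}}{(q-1)^{k+1}}\right).$$
   Context: The weight ${\rm wt}(x)$ of $x\in GF(q)^n$ is the number of its nonzero coordinates. For $W\subseteq GF(q)^n$, $\mathcal{A}_i(W)=\{x\in W:{\rm wt}(x)=i\}$. $V^\perp=\{u\in GF(q)^n:(u,v)=0\text{ for all }v\in V\}$ with the standard bilinear form $(u,v)=\sum_i u_iv_i$. *)

From HB Require Import structures.
From mathcomp Require Import all_boot all_order all_algebra all_field.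
Set Implicit Arguments. Unset Strict Implicit. Unset Printing Implicit Defensive.
Import Order.TTheory GRing.Theory Num.Theory.
Local Open Scope ring_scope.

Section Defs.
Variables (F : finFieldType) (n : nat).

Definition bform (u v : 'rV[F]_n) : F := \sum_(i < n) u 0 i * v 0 i.

Definition wt (x : 'rV[F]_n) : nat := #|[set i : 'I_n | x 0 i != 0]|.

Definition Aw (W : {pred 'rV[F]_n}) (i : nat) : {set 'rV[F]_n} :=
  [set x | (x \in W) && (wt x == i)].

Definition perp (V : {vspace 'rV[F]_n}) : {set 'rV[F]_n} :=
  [set u | [forall v, (v \in V) ==> (bform u v == 0)]].
End Defs.

From HB Require Import structures.
From mathcomp Require Import all_boot all_order all_algebra all_field.
From mathcomp Require Import zify ring.
Set Implicit Arguments. Unset Strict Implicit. Unset Printing Implicit Defensive.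
Import Order.TTheory GRing.Theory Num.Theory.
Local Open Scope ring_scope.

(* The MacWilliams identity in homogeneous form,
     q^n W_V(a, b) = |V| W_{V^perp}(a + (q - 1) b, a - b),
   holds in any commutative ring.  Expanding a^(n - wt v) b^(wt v) over the
   supersets S of the support of v reduces it to counting, for each S, the
   vectors of V supported in S; rank-nullity for V and the coordinate space
   C_S relates this count to the number of vectors of V^perp supported in the
   complement of S.  The corollary is the identity at a = 1 - x,
   b = x / (q - 1) in Q[x], integrated over [0, 1]: the Bernstein integrals
   int x^k (1 - x)^(n - k) = 1 / ((n + 1) C(n, k)) give the left-hand side,
   and the integrals of (1 - q x / (q - 1))^k the right-hand side. *)

Lemma prod_if_mem (R : comPzSemiRingType) n (A : {set 'I_n}) (y z : R) :
  \prod_i (if i \in A then y else z) = y ^+ #|A| * z ^+ (n - #|A|).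
Proof.
rewrite (bigID [in A]) /= (eq_bigr (fun=> y)) => [|i ->//].
rewrite [X in _ * X](eq_bigr (fun=> z)) => [|i /negPf ->//].
rewrite !prodr_const -[n in (n - _)%N](card_ord n) -(cardC A) addKn.
by congr (_ * _ ^+ _); apply: eq_card => i; rewrite !inE.
Qed.

Lemma sum_supsets (R : comPzSemiRingType) n (A : {set 'I_n}) (y z : R) :
  \sum_(S : {set 'I_n} | A \subset S) y ^+ #|S| * z ^+ (n - #|S|)
  = y ^+ #|A| * (y + z) ^+ (n - #|A|).
Proof.
have -> : y ^+ #|A| * (y + z) ^+ (n - #|A|) =
          \sum_(S : {set 'I_n}) \prod_i (if i \in S then y else if i \in A then 0 else z).
  rewrite -prod_if_mem (eq_bigr (fun i => y + if i \in A then 0 else z)).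
    exact: bigA_distr.
  by move=> i _; case: ifP; rewrite ?addr0.
rewrite [RHS](bigID (fun S : {set 'I_n} => A \subset S)) /= [X in _ = _ + X]big1 ?addr0.
  apply: eq_bigr => S sAS; rewrite -prod_if_mem; apply: eq_bigr => i _.
  by case: ifPn => // iS; rewrite (contraNF (subsetP sAS i)).
by move=> S /subsetPn [i iA iS]; rewrite (bigD1 i) //= (negPf iS) iA mul0r.
Qed.

Section SupportMatrix.
Variables (F : finFieldType) (n : nat).
Local Notation q := #|F|.
Implicit Types (S : {set 'I_n}) (u v : 'rV[F]_n).

Definition supp (v : 'rV[F]_n) : {set 'I_n} := [set i | v 0 i != 0].

Definition supp_mx S : 'M[F]_n := diag_mx (\row_i (i \in S)%:R).

Lemma mul_supp_mx m (A : 'M[F]_(m, n)) S i j :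
  (A *m supp_mx S) i j = if j \in S then A i j else 0.
Proof. by rewrite mul_mx_diag !mxE; case: (j \in S); rewrite ?mulr1 ?mulr0. Qed.

Lemma submx_supp_mx v S : (v <= supp_mx S)%MS = (supp v \subset S).
Proof.
apply/idP/subsetP => [/submxP [w ->] i | sub_vS].
  by rewrite inE mul_supp_mx; case: ifP; rewrite ?eqxx.
have -> : v = v *m supp_mx S.
  apply/rowP => j; rewrite mul_supp_mx; case: ifPn => // jS.
  by apply/eqP; apply: contraNT jS => vj; apply: sub_vS; rewrite inE.
exact: submxMl.
Qed.

Lemma card_submx m (A : 'M[F]_(m, n)) :
  #|[set v : 'rV[F]_n | (v <= A)%MS]| = (q ^ \rank A)%N.
Proof.
have -> : [set v : 'rV[F]_n | (v <= A)%MS] = [set w *m row_base A | w : 'rV_(\rank A)].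
  apply/setP => v; rewrite inE -(eq_row_base A); apply/submxP/imsetP.
    by move=> [w ->]; exists w.
  by move=> [w _ ->]; exists w.
by rewrite card_imset ?card_mx ?mul1n //; exact: row_free_inj (row_base_free A).
Qed.

Lemma card_supp_sub S : #|[set v : 'rV[F]_n | supp v \subset S]| = (q ^ #|S|)%N.
Proof.
transitivity #|pffun_on (0 : F) S predT|; last by rewrite card_pffun_on.
pose vec (f : {ffun 'I_n -> F}) : 'rV[F]_n := \row_j f j.
have vec_inj : injective vec.
  by move=> f g /rowP e; apply/ffunP => j; have := e j; rewrite !mxE.
rewrite -(card_imset _ vec_inj); apply: eq_card => v; rewrite inE; apply/subsetP/imsetP.
  move=> sub_vS; exists [ffun j => v 0 j]; last by apply/rowP => j; rewrite !mxE ffunE.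
  apply/pffun_onP; split => //; apply/subsetP => i; rewrite inE ffunE => vi.
  by apply: sub_vS; rewrite inE.
move=> [f /pffun_onP [sub_fS _] ->] i; rewrite inE mxE => fi.
by apply: (subsetP sub_fS); rewrite inE.
Qed.

Lemma rank_supp_mx S : \rank (supp_mx S) = #|S|.
Proof.
apply: (@expnI q); first exact: finNzRing_gt1.
rewrite -card_submx -card_supp_sub; apply: eq_card => v.
by rewrite !inE submx_supp_mx.
Qed.

Lemma card_submx_supp m (B : 'M[F]_(m, n)) S :
  (#|[set v : 'rV_n | (v <= B)%MS && (supp v \subset S)]| * q ^ (n - #|S|))%N =
  (#|[set v : 'rV_n | (v <= B)%MS]| *
   #|[set u : 'rV_n | (u *m B^T == 0%R) && (supp u \subset ~: S)]|)%N.
Proof.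
have -> : [set v : 'rV_n | (v <= B)%MS && (supp v \subset S)] =
          [set v : 'rV_n | (v <= B :&: supp_mx S)%MS].
  by apply/setP => v; rewrite !inE sub_capmx submx_supp_mx.
have -> : [set u : 'rV_n | (u *m B^T == 0%R) && (supp u \subset ~: S)] =
          [set u : 'rV_n | (u <= kermx (row_mx B^T (supp_mx S)))%MS].
  apply/setP => u; rewrite !inE sub_kermx mul_mx_row row_mx_eq0; congr (_ && _).
  apply/subsetP/eqP => [sub_uS | uS0].
    apply/rowP => j; rewrite mul_supp_mx mxE; case: ifPn => // jS.
    by apply/eqP; apply: contraTT jS => uj; have := sub_uS j; rewrite !inE => ->.
  move=> i; rewrite !inE; apply: contra => iS.
  by have := congr1 (fun w : 'rV_n => w 0 i) uS0; rewrite mul_supp_mx iS mxE => ->.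
have rank_sum : \rank (row_mx B^T (supp_mx S)) = \rank (B + supp_mx S)%MS.
  by rewrite -[supp_mx S]tr_diag_mx -tr_col_mx mxrank_tr (addsmxE B _).1 tr_diag_mx.
have := mxrank_sum_cap B (supp_mx S); have := rank_leq_col (B + supp_mx S)%MS.
rewrite !card_submx mxrank_ker rank_sum rank_supp_mx -!expnD.
have := max_card S; rewrite card_ord => le_Sn le_sum_n sum_cap.
congr (q ^ _)%N; lia.
Qed.

End SupportMatrix.

Section WeightEnumerator.
Variables (F : finFieldType) (n : nat).
Local Notation q := #|F|.
Implicit Types (S : {set 'I_n}) (u v : 'rV[F]_n) (W : {pred 'rV[F]_n}).

Definition wenum (R : pzSemiRingType) W (a b : R) : R :=
  \sum_(v in W) a ^+ (n - wt v) * b ^+ wt v.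

Lemma wt_le v : (wt v <= n)%N.
Proof. by rewrite -[n in (_ <= n)%N]card_ord max_card. Qed.

Lemma sum_by_weight (R : nmodType) W (f : nat -> R) :
  \sum_(v in W) f (wt v) = \sum_(k < n.+1) f k *+ #|Aw W k|.
Proof.
rewrite (partition_big (fun v => inord (wt v) : 'I_n.+1) xpredT) //=.
apply: eq_bigr => k _; rewrite -sumr_const; apply: eq_big => v.
  by rewrite !inE -val_eqE /= inordK ?ltnS ?wt_le.
by move=> /andP [_ /eqP <-]; rewrite inordK ?ltnS ?wt_le.
Qed.

Lemma wenum_by_weight (R : pzSemiRingType) W (a b : R) :
  wenum W a b = \sum_(k < n.+1) a ^+ (n - k) * b ^+ k *+ #|Aw W k|.
Proof. exact: (sum_by_weight _ (fun k => a ^+ (n - k) * b ^+ k)). Qed.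

Lemma sum_supp_supsets (R : nmodType) W (f : {set 'I_n} -> R) :
  \sum_(v in W) \sum_(S : {set 'I_n} | supp v \subset S) f S
  = \sum_(S : {set 'I_n}) f S *+ #|[set v in W | supp v \subset S]|.
Proof.
rewrite (exchange_big_dep xpredT) //=; apply: eq_bigr => S _.
by rewrite -sumr_const; apply: eq_bigl => v; rewrite !inE.
Qed.

Lemma wenum_supsets (R : comPzSemiRingType) W (y z : R) :
  wenum W (y + z) y
  = \sum_(S : {set 'I_n}) y ^+ #|S| * z ^+ (n - #|S|) *+ #|[set v in W | supp v \subset S]|.
Proof.
rewrite -sum_supp_supsets; apply: eq_bigr => v _.
by rewrite sum_supsets mulrC.
Qed.

Variable V : {vspace 'rV[F]_n}.

Definition vbasis_mx : 'M[F]_(\dim V, n) := \matrix_i (vbasis V)`_i.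

Lemma memv_vbasis_mx v : (v \in V) = (v <= vbasis_mx)%MS.
Proof.
apply/idP/submxP => [vV | [w ->]].
  exists (\row_i coord (vbasis V) i v).
  rewrite mulmx_sum_row {1}(coord_vbasis vV); apply: eq_bigr => i _.
  by rewrite mxE rowK.
rewrite mulmx_sum_row; apply: memv_suml => i _; apply: memvZ.
by rewrite rowK vbasis_mem ?mem_nth ?size_tuple.
Qed.

Lemma bformE u v : bform u v = (u *m v^T) 0 0.
Proof. by rewrite /bform mxE; apply: eq_bigr => i _; rewrite mxE. Qed.

Lemma perp_vbasis_mx u : (u \in perp V) = (u *m vbasis_mx^T == 0).
Proof.
rewrite inE; apply/forallP/eqP => [u_perp | u_ker v].
  apply/rowP => i; rewrite [RHS]mxE -(eqP (implyP (u_perp (vbasis V)`_i) _)).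
    by rewrite bformE !mxE; apply: eq_bigr => j _; rewrite !mxE.
  by rewrite vbasis_mem ?mem_nth ?size_tuple.
apply/implyP; rewrite memv_vbasis_mx => /submxP [w ->].
by rewrite bformE trmx_mul mulmxA u_ker mul0mx mxE.
Qed.

Lemma card_vspace_supp S :
  (#|[set v in V | supp v \subset S]| * q ^ (n - #|S|))%N
  = (q ^ \dim V * #|[set u in perp V | supp u \subset ~: S]|)%N.
Proof.
have <- : #|[set v : 'rV_n | (v <= vbasis_mx)%MS]| = (q ^ \dim V)%N.
  by rewrite -card_vspace; apply: eq_card => v; rewrite inE memv_vbasis_mx.
have -> : [set v in V | supp v \subset S]
          = [set v : 'rV_n | (v <= vbasis_mx)%MS && (supp v \subset S)].
  by apply/setP => v; rewrite !inE memv_vbasis_mx.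
have -> : [set u in perp V | supp u \subset ~: S]
          = [set u : 'rV_n | (u *m vbasis_mx^T == 0%R) && (supp u \subset ~: S)].
  by apply/setP => u; rewrite inE perp_vbasis_mx inE.
exact: card_submx_supp.
Qed.

Lemma macwilliams (R : comPzRingType) (a b : R) :
  wenum (mem V) a b *+ q ^ n
  = wenum (mem (perp V)) (a + b *+ (q - 1)) (a - b) *+ q ^ \dim V.
Proof.
have card_setC S : #|~: S| = (n - #|S|)%N by rewrite cardsCs setCK card_ord.
have le_card S : (#|S| <= n)%N by have := max_card S; rewrite card_ord.
have -> : a + b *+ (q - 1) = (a - b) + b *+ q.
  have q_eq : q = (q - 1).+1 by rewrite subn1 prednK // ltnW ?finNzRing_gt1.
  by rewrite [in RHS]q_eq mulrS addrA subrK.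
rewrite -[a in LHS](subrKC b) !wenum_supsets -!sumrMnl.
rewrite [RHS](reindex_inj (@setC_inj _)); apply: eq_bigr => S _ /=.
rewrite card_setC subKn // mulrC exprMn_n mulrnAr -!mulrnA; congr (_ *+ _).
have -> : (q ^ n = q ^ #|S| * q ^ (n - #|S|))%N by rewrite -expnD subnKC.
by rewrite mulnCA card_vspace_supp [(_ ^ \dim V * _)%N]mulnC.
Qed.

End WeightEnumerator.

Section Integral01.
Variable R : numFieldType.
Implicit Types (p r : {poly R}) (c : R).

Definition integral01 p : R := \sum_(i < size p) p`_i / i.+1%:R.

Lemma integral01E N p :
  (size p <= N)%N -> integral01 p = \sum_(i < N) p`_i / i.+1%:R.
Proof.
move=> le_pN; rewrite /integral01 (big_ord_widen N (fun i => p`_i / i.+1%:R)) //.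
rewrite big_mkcond; apply: eq_bigr => i _; case: ltnP => // le_p_i.
by rewrite nth_default ?mul0r.
Qed.

Lemma integral01_is_linear : scalar integral01.
Proof.
move=> c p r; pose N := maxn (size p) (size r).
rewrite !(@integral01E N) ?leq_maxl ?leq_maxr //; last first.
  rewrite (leq_trans (size_polyD _ _)) // geq_max leq_maxr andbT.
  exact: leq_trans (size_scale_leq _ _) (leq_maxl _ _).
rewrite mulr_sumr -big_split; apply: eq_bigr => i _.
by rewrite coefD coefZ mulrDl mulrA.
Qed.

HB.instance Definition _ :=
  GRing.isLinear.Build R {poly R} R *%R integral01 integral01_is_linear.

Lemma integral01_deriv p : integral01 p^`() = p.[1] - p.[0].
Proof.
have le_size : (size p^`() <= size p)%N.
  by have [->|/lt_size_deriv/ltnW//] := eqVneq p 0; rewrite deriv0.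
rewrite (integral01E le_size) horner_coef0 horner_coef.
under eq_bigr => i _ do rewrite coef_deriv -[p`_i.+1 *+ _]mulr_natr mulfK ?pnatr_eq0 //.
under [in RHS]eq_bigr => i _ do rewrite expr1n mulr1.
case hN : (size p) => [|N]; first by rewrite !big_ord0 nth_default ?subrr ?hN.
rewrite big_ord_recr big_ord_recl /= (nth_default _ (eq_leq hN)) addr0 addrC addKr.
by apply: eq_bigr => i _; rewrite /bump leq0n.
Qed.
End Integral01.

Section Integral01Values.
Variable R : numFieldType.

Lemma integral01_pow_lin (c : R) k : c != 0 ->
  integral01 ((1 - c *: 'X) ^+ k) = (1 - (1 - c) ^+ k.+1) / (c * k.+1%:R).
Proof.
move=> c_neq0; set P := 1 - c *: 'X.
have := integral01_deriv (P ^+ k.+1).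
rewrite deriv_exp derivB derivZ derivX -polyC1 derivC sub0r alg_polyC /=.
rewrite -polyCN mul_polyC raddfMn /= linearZ /= !horner_exp !hornerE subr0 expr1n.
move=> h; apply: (canRL (mulfK _)); first by rewrite mulf_neq0 ?pnatr_eq0.
rewrite -[1 - _]opprB -h -mulr_natr; ring.
Qed.

Lemma integral01_beta_step j m :
  j.+1%:R * integral01 ('X^j * (1 - 'X) ^+ m.+1 : {poly R})
  = m.+1%:R * integral01 ('X^(j.+1) * (1 - 'X) ^+ m : {poly R}).
Proof.
have := integral01_deriv ('X^(j.+1) * (1 - 'X) ^+ m.+1 : {poly R}).
rewrite !hornerE subrr !expr0n /= mulr0 mul0r subrr.
rewrite derivM derivXn deriv_exp derivB derivX -polyC1 derivC sub0r polyC1 /=.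
rewrite mulN1r mulrnAl mulrnAr mulrN raddfD !raddfMn raddfN /=.
rewrite -[_ *+ j.+1]mulr_natl -[_ *+ m.+1]mulr_natl mulrN.
by move/eqP; rewrite addr_eq0 opprK => /eqP.
Qed.

Lemma integral01_beta j m :
  integral01 ('X^j * (1 - 'X) ^+ m : {poly R}) * (j + m).+1`!%:R = (j`! * m`!)%:R.
Proof.
elim: j m => [|j IHj] m.
  rewrite expr0 mul1r -[X in 1 - X]scale1r integral01_pow_lin ?oner_neq0 //.
  by rewrite subrr expr0n subr0 add0n fact0 mul1n factS natrM !mul1r mulKf ?pnatr_eq0.
apply: (@mulfI _ m.+1%:R); first by rewrite pnatr_eq0.
rewrite mulrA -integral01_beta_step -mulrA addSn -addnS IHj !factS !natrM.
ring.
Qed.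

Lemma integral01_bernstein n k : (k <= n)%N ->
  integral01 ('X^k * (1 - 'X) ^+ (n - k) : {poly R}) = ((n.+1 * 'C(n, k))%:R)^-1.
Proof.
move=> le_kn; have fact_neq0 : ((k`! * (n - k)`!)%:R : R) != 0.
  by rewrite pnatr_eq0 muln_eq0 negb_or -!lt0n !fact_gt0.
have bin_neq0 : ((n.+1 * 'C(n, k))%:R : R) != 0.
  by rewrite pnatr_eq0 muln_eq0 negb_or -!lt0n bin_gt0.
have := integral01_beta k (n - k).
rewrite subnKC // factS -(bin_fact le_kn) mulnA natrM mulrA -[X in _ = X]mul1r.
by move/(mulIf fact_neq0)/(canRL (mulfK bin_neq0)); rewrite div1r.
Qed.
End Integral01Values.

Section IntegratedWeightEnumerator.
Variables (R : numFieldType) (F : finFieldType) (n t : nat) (W : {pred 'rV[F]_n}).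
Hypothesis t_gt0 : (0 < t)%N.

Let t_neq0 : (t%:R : R) != 0. Proof. by rewrite pnatr_eq0 -lt0n. Qed.

Lemma integral01_wenum_bernstein :
  integral01 (wenum W (1 - 'X) (t%:R^-1 *: 'X) : {poly R})
  = (\sum_(k < n.+1) #|Aw W k|%:R / ((t ^ k * 'C(n, k))%N)%:R) / n.+1%:R.
Proof.
rewrite wenum_by_weight raddf_sum mulr_suml; apply: eq_bigr => k _.
have le_kn : (k <= n)%N by rewrite -ltnS.
rewrite raddfMn /= exprZn -scalerAr linearZ /= [_ * 'X^k]mulrC integral01_bernstein //.
rewrite -[_ *+ #|Aw W k|]mulr_natr !natrM natrX exprVn; field.
by rewrite addrC natr1 !pnatr_eq0 -!lt0n bin_gt0 le_kn expf_neq0.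
Qed.

Lemma integral01_wenum_pow_lin :
  integral01 (wenum W 1 (1 - (1 + t%:R^-1) *: 'X) : {poly R})
  = t%:R / t.+1%:R * \sum_(k < n.+1)
      #|Aw W k|%:R / k.+1%:R * (1 - (-1) ^+ k.+1 / ((t ^ k.+1)%N)%:R).
Proof.
have c_neq0 : 1 + t%:R^-1 != 0 :> R by rewrite gt_eqF // addr_gt0 ?invr_gt0 ?ltr0n.
rewrite wenum_by_weight raddf_sum mulr_sumr; apply: eq_bigr => k _.
rewrite expr1n mul1r raddfMn /= integral01_pow_lin // opprD addrA subrr add0r.
rewrite (exprNn t%:R^-1) exprVn natrX -[_ *+ #|Aw W k|]mulr_natr; field.
by rewrite expf_neq0 // t_neq0 !(addrC 1) !natr1 !pnatr_eq0.
Qed.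

End IntegratedWeightEnumerator.

Unset Implicit Arguments.
Theorem corollary1 (F : finFieldType) (n : nat) (V : {vspace 'rV[F]_n}) :
  let q := #|F| in
  \sum_(k < n.+1)
     (#|Aw (mem V) k|)%:R / (((q - 1) ^ k * 'C(n, k))%N)%:R
  = (((n + 1) * (q - 1))%N)%:R / ((q ^ (1 + n - \dim V))%N)%:R *
    \sum_(k < n.+1)
      (#|Aw (mem (perp V)) k|)%:R / (k.+1)%:R
        * (1 - (-1) ^+ k.+1 / (((q - 1) ^ k.+1)%N)%:R) :> rat.
Proof.
move=> q; set t := (q - 1)%N.
have q_eq : q = t.+1 by rewrite /t subn1 prednK // ltnW ?finNzRing_gt1.
have t_gt0 : (0 < t)%N by rewrite -ltnS -q_eq finNzRing_gt1.
have t_neq0 : (t%:R : rat) != 0 by rewrite pnatr_eq0 -lt0n.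
have le_dim : (\dim V <= n)%N.
  by have := dimvS (subvf V); rewrite dimvf /dim /= mul1n.
have pow_eq : (q ^ (1 + n - \dim V) * q ^ \dim V = q * q ^ n)%N.
  by rewrite -expnD subnK ?leqW // add1n expnS.
have sum_eq : (1 - 'X) + (t%:R^-1 *: 'X) *+ t = 1 :> {poly rat}.
  by rewrite -scaler_nat scalerA mulfV // scale1r subrK.
have diff_eq : (1 - 'X) - t%:R^-1 *: 'X = 1 - (1 + t%:R^-1) *: 'X :> {poly rat}.
  by rewrite scalerDl scale1r opprD addrA.
have := congr1 (@integral01 rat) (macwilliams V (1 - 'X : {poly rat}) (t%:R^-1 *: 'X)).
rewrite sum_eq diff_eq !raddfMn /= integral01_wenum_bernstein // integral01_wenum_pow_lin //.
have pow_neq0 k : ((q ^ k)%:R : rat) != 0 by rewrite pnatr_eq0 expn_eq0 q_eq.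
have N_neq0 : (n.+1%:R : rat) != 0 by rewrite pnatr_eq0.
rewrite -q_eq -[_ *+ (#|F| ^ n)]mulr_natr -[_ *+ (#|F| ^ \dim V)]mulr_natr.
move/(canRL (mulfK (pow_neq0 n)))/(canRL (divfK N_neq0)) => ->.
rewrite -[(q ^ (1 + n - _))%:R](mulfK (pow_neq0 (\dim V))) -natrM pow_eq !natrM addn1.
by field; rewrite !pow_neq0 pnatr_eq0 q_eq.
Qed.
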